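(* Let $G=(V,E)$ be a finite simple undirected graph of maximum degree at most $\Delta$, let $M$ be computed by a run of \textsc{MinGreedy} on $G$, and let $M^*$ be a maximum matching such that each component of $(V,M\cup M^* )$ with an edge is a singleton or an $M$-$M^*$-path. Let $\{u,v\}\in M$. If $\{u,v\}$ is a singleton, then $u$ and $v$ together are the source of at most $2(\Delta-1)$ transfers. If $\{u,v\}$ is an edge of an $M$-$M^*$-path, then $u$ and $v$ together are the source of at most $2(\Delta-2)$ transfers.
   Context: \textsc{MinGreedy}: starting with $M=\emptyset$, repeatedly select an arbitrary node $u$ of minimum non-zero current degree and an arbitrary neighbor $v$ of $u$, add $\{u,v\}$ to $M$ and remove all edges incident with $u$ or $v$ from the current graph. A singleton is an edge of $M\cap M^*$ forming a component of $(V,M\cup M^* )$. An $M$-$M^*$-path is a component of $(V,M\cup M^* )$ that is an alternating path starting and ending with an $M^*$-edge, with $m\geq1$ edges of $M$ and $m+1$ edges of $M^*$; its endpoints are its two $M$-uncovered end nodes. Let $F=E\setminus(M\cup M^* )$. For an endpoint $w$ of an $M$-$M^*$-path, an edge $\{v,w\}\in F$ is a transfer from $v$ to $w$ if, in the step of the algorithm in which $v$ is matched, the current degree of $w$ drops to at most $1$ (i.e. after that step $w$ has current degree at most $1$). *)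

(* Graph: finite type V with a symmetric irreflexive adjacency
   relation adj. Undirected edges are represented as two-element sets {x,y}. *)
From mathcomp Require Import all_boot.
Set Implicit Arguments. Unset Strict Implicit. Unset Printing Implicit Defensive.

Section Defs.
Variable V : finType.
Variable adj : rel V.

Definition simple_graph := symmetric adj /\ irreflexive adj.
Definition max_deg_le (D : nat) := forall x : V, #|[set y | adj x y]| <= D.

(* A run is the sequence of pairs (u_i, v_i) matched in steps 0,1,2,... *)
Definition matched_before (r : seq (V * V)) (i : nat) (x : V) : bool :=
  x \in flatten [seq [:: p.1; p.2] | p <- take i r].

(* current degree of w before step i (i.e. after the first i steps):
   edges incident with a matched node have been removed *)
Definition curdeg (r : seq (V * V)) (i : nat) (w : V) : nat :=
  if matched_before r i w then 0
  else #|[set x | adj w x & ~~ matched_before r i x]|.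

Definition mingreedy_run (r : seq (V * V)) : Prop :=
  (forall i u v, onth r i = Some (u, v) ->
     [/\ 0 < curdeg r i u,
         (forall w, 0 < curdeg r i w -> curdeg r i u <= curdeg r i w),
         adj u v & ~~ matched_before r i v])
  /\ (forall w, curdeg r (size r) w = 0).

Definition run_matching (r : seq (V * V)) : {set {set V}} :=
  [set [set p.1; p.2] | p in r].

Definition is_matching (N : {set {set V}}) : Prop :=
  (forall e, e \in N -> exists x y, adj x y /\ e = [set x; y]) /\
  (forall e1 e2, e1 \in N -> e2 \in N -> e1 != e2 -> [disjoint e1 & e2]).

Definition is_maximum_matching (N : {set {set V}}) : Prop :=
  is_matching N /\ forall N', is_matching N' -> #|N'| <= #|N|.

Definition covers (N : {set {set V}}) (x : V) : bool :=
  [exists e in N, x \in e].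

Section Union.
Variables M Ms : {set {set V}}.

Definition urel : rel V := fun x y => (x != y) && ([set x; y] \in M :|: Ms).

Definition ucomp (x : V) : {set V} := [set y | connect urel x y].

Definition singleton (x y : V) : Prop :=
  [set x; y] \in M :&: Ms /\ ucomp x = [set x; y].

(* the sequence p = [x_0; ...; x_{2m+1}] spans a component of (V, M \cup M* )
   which is an alternating path starting and ending with an M*-edge,
   with m >= 1 edges of M and m+1 edges of M*, whose end nodes are M-uncovered *)
Definition MMpath (p : seq V) : Prop :=
  [/\ uniq p, ~~ odd (size p) /\ 4 <= size p,
      (forall i x y, onth p i = Some x -> onth p i.+1 = Some y ->
         [set x; y] \in (if odd i then M else Ms)),
      (forall x, onth p 0 = Some x -> ~~ covers M x /\ ucomp x = [set z in p]) &
      (forall x, onth p (size p).-1 = Some x -> ~~ covers M x)].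

Definition MMendpoint (w : V) : Prop :=
  exists p, MMpath p /\ (onth p 0 = Some w \/ onth p (size p).-1 = Some w).

Definition MMpath_edge (u v : V) : Prop :=
  exists p i x y, [/\ MMpath p, onth p i = Some x, onth p i.+1 = Some y &
                     [set x; y] = [set u; v]].

Definition components_ok : Prop :=
  forall x, (exists y, urel x y) ->
    (exists y, singleton x y) \/ (exists p, MMpath p /\ x \in p).
End Union.

(* {s,w} in F = E \ (M \cup M* ) is a transfer from s to w: w is an endpoint
   of an M-M*-path and after the step of the run in which s is matched,
   the current degree of w is at most 1 *)
Definition transfer (r : seq (V * V)) (Ms : {set {set V}}) (s w : V) : Prop :=
  let M := run_matching r in
  [/\ adj s w, [set s; w] \notin M :|: Ms, MMendpoint M Ms w &
      exists i a b, [/\ onth r i = Some (a, b), (s == a) || (s == b) &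
                        curdeg r i.+1 w <= 1]].

End Defs.

(** A transfer from [s] runs along an edge at [s] outside [M ∪ M*], and
    distinct transfers from [s] reach distinct nodes, so there are at most
    [deg s] minus the number of [M ∪ M*]-edges at [s] of them.  Each end of a
    singleton has one such edge; a node of an [M]-[M*]-path that is covered by
    [M] is an interior node of the path and has two. *)

From mathcomp Require Import all_boot.

Set Implicit Arguments.
Unset Strict Implicit.
Unset Printing Implicit Defensive.

Section Edges.
Variables (V : finType) (adj : rel V).
Hypotheses (adj_sym : symmetric adj) (adj_irr : irreflexive adj).

Lemma adj_set2 x y x' y' : adj x' y' -> [set x; y] = [set x'; y'] -> adj x y.
Proof.
move=> adj'xy Exy.
have : y' \in [set x; y] by rewrite Exy set22.
have : x' \in [set x; y] by rewrite Exy set21.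
rewrite !inE => /orP[]/eqP<- /orP[]/eqP Ey'; rewrite -?Ey' ?adj_irr // in adj'xy *.
by rewrite adj_sym.
Qed.

Lemma run_matching_adj r x y :
  mingreedy_run adj r -> [set x; y] \in run_matching r -> adj x y.
Proof.
move=> [run _] /imsetP[[a b] /onthP[i ri] Exy].
by have [_ _ adj_ab _] := run i a b ri; apply: adj_set2 adj_ab Exy.
Qed.

Lemma matching_adj N x y : is_matching adj N -> [set x; y] \in N -> adj x y.
Proof. by move=> [N_edges _] /N_edges[x' [y' [adj'xy Exy]]]; apply: adj_set2 Exy. Qed.

End Edges.

Lemma MMpath_covered_neighbours (V : finType) (M Ms : {set {set V}}) p s :
  MMpath M Ms p -> s \in p -> covers M s ->
  exists a b, [/\ a != b, [set s; a] \in M :|: Ms & [set s; b] \in M :|: Ms].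
Proof.
move=> [p_uniq _ p_edges p_head p_last] /onthP[j p_j] s_cov.
have j_lt : j < size p by rewrite -onthTE p_j.
case: j p_j j_lt => [p_0 _ | j p_j j_lt]; first by case: (p_head s p_0); rewrite s_cov.
have j2_lt : j.+2 < size p.
  rewrite ltn_neqAle j_lt andbT; apply: contraTneq s_cov => Ej.
  by apply: p_last; rewrite -Ej.
have p_edgeE i x y : onth p i = Some x -> onth p i.+1 = Some y ->
    [set x; y] \in M :|: Ms.
  by move=> p_i p_i1; case: ifP (p_edges i x y p_i p_i1) => _ e; rewrite inE e ?orbT.
have onth_nth i : i < size p -> onth p i = Some (nth s p i).
  by move=> i_lt; rewrite onthE (nth_map s).
exists (nth s p j), (nth s p j.+2); split.
- by rewrite (nth_uniq s (ltnW j_lt) j2_lt p_uniq) ltn_eqF.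
- by rewrite setUC; apply: p_edgeE p_j; apply: onth_nth; apply: ltnW.
- by apply: p_edgeE p_j _; apply: onth_nth.
Qed.

Section Transfers.
Variables (V : finType) (adj : rel V) (D : nat) (r : seq (V * V)).
Variable Ms : {set {set V}}.
Hypotheses (adj_sym : symmetric adj) (adj_irr : irreflexive adj).
Hypotheses (maxdeg : max_deg_le adj D) (run : mingreedy_run adj r).
Hypothesis Ms_matching : is_matching adj Ms.

Local Notation M := (run_matching r).

Lemma union_edge_adj x y : [set x; y] \in M :|: Ms -> adj x y.
Proof.
by rewrite inE => /orP[]; [apply: run_matching_adj | apply: matching_adj].
Qed.

Lemma card_transfers_le s (S T : {set V}) :
  (forall a, a \in S -> [set s; a] \in M :|: Ms) ->
  (forall w, w \in T -> transfer adj r Ms s w) ->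
  #|T| <= D - #|S|.
Proof.
move=> S_edges T_transfers.
set N := [set y | adj s y].
have SN : S \subset N by apply/subsetP=> a /S_edges/union_edge_adj; rewrite inE.
have TNS : T \subset N :\: S.
  apply/subsetP=> w /T_transfers[adj_sw notMMs _ _]; rewrite !inE adj_sw andbT.
  by apply: contra notMMs => /S_edges.
apply: leq_trans (subset_leq_card TNS) _.
by rewrite cardsD (setIidPr SN); apply: leq_sub2r (maxdeg s).
Qed.

Lemma card_transfers_union_edge_le s s' (T : {set V}) :
  [set s; s'] \in M :|: Ms ->
  (forall w, w \in T -> transfer adj r Ms s w) -> #|T| <= D - 1.
Proof.
by move=> MMs_ss'; rewrite -(cards1 s'); apply: card_transfers_le => _ /set1P->.
Qed.

Lemma card_transfers_MMpath_le p s (T : {set V}) :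
  MMpath M Ms p -> s \in p -> covers M s ->
  (forall w, w \in T -> transfer adj r Ms s w) -> #|T| <= D - 2.
Proof.
move=> MMp s_p s_cov.
have [a [b [ab MMs_sa MMs_sb]]] := MMpath_covered_neighbours MMp s_p s_cov.
have -> : 2 = #|[set a; b]| by rewrite cards2 ab.
by apply: card_transfers_le => _ /set2P[]->.
Qed.

End Transfers.

Theorem lemma4 (V : finType) (adj : rel V) (D : nat)
  (r : seq (V * V)) (Ms : {set {set V}}) :
  simple_graph adj -> max_deg_le adj D ->
  mingreedy_run adj r ->
  is_maximum_matching adj Ms ->
  components_ok (run_matching r) Ms ->
  forall u v : V, [set u; v] \in run_matching r ->
  forall Tu Tv : {set V},
    (* Tu, Tv: sets of nodes receiving a transfer from u, resp. from v *)
    (forall w, w \in Tu -> transfer adj r Ms u w) ->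
    (forall w, w \in Tv -> transfer adj r Ms v w) ->
    (singleton (run_matching r) Ms u v -> #|Tu| + #|Tv| <= 2 * (D - 1)) /\
    (MMpath_edge (run_matching r) Ms u v -> #|Tu| + #|Tv| <= 2 * (D - 2)).
Proof.
move=> [adj_sym adj_irr] maxdeg run [Ms_matching _] _ u v uvM Tu Tv Tu_tr Tv_tr.
have edge_le := card_transfers_union_edge_le adj_sym adj_irr maxdeg run Ms_matching.
have path_le := card_transfers_MMpath_le adj_sym adj_irr maxdeg run Ms_matching.
rewrite !mul2n -!addnn; split=> [_ | [p [i [x [y [MMp p_i p_i1 Exy]]]]]].
  have uvMMs : [set u; v] \in run_matching r :|: Ms by rewrite inE uvM.
  have vuMMs : [set v; u] \in run_matching r :|: Ms by rewrite setUC.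
  exact: leq_add (edge_le _ _ _ uvMMs Tu_tr) (edge_le _ _ _ vuMMs Tv_tr).
have node_le s (T : {set V}) : s \in [set u; v] ->
    (forall w, w \in T -> transfer adj r Ms s w) -> #|T| <= D - 2.
  move=> s_uv; apply: path_le MMp _ _.
    by move: s_uv; rewrite -Exy => /set2P[]->; apply/onthP; [exists i | exists i.+1].
  by apply/existsP; exists [set u; v]; rewrite uvM.
exact: leq_add (node_le _ _ (set21 u v) Tu_tr) (node_le _ _ (set22 u v) Tv_tr).
Qed.
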